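(* Let $I,J$ be positive integers, let $a_1,\ldots,a_J\in[0,\infty)^I$ be nonzero vectors, and consider the statistical model in which, for a parameter $\theta=(\theta_1,\ldots,\theta_I)\in(0,\infty)^I$, the observed counts $n_1,\ldots,n_J$ are independent with $n_j\sim\mathrm{Poisson}(\theta\cdot a_j)$, so that the joint probability mass function is $$f_\theta(n_1,\ldots,n_J)=\prod_{j=1}^J\frac{(\theta\cdot a_j)^{n_j}e^{-\theta\cdot a_j}}{n_j!}.$$ Then for any collapsing $\mathcal{C}=\{C_1,\ldots,C_K\}$ of the read types $s_1,\ldots,s_J$, the vector of collapsed counts $n_{\mathcal{C}}=(n_{C_1},\ldots,n_{C_K})$, where $n_{C_k}=\sum_{s_j\in C_k}n_j$, is a sufficient statistic for $\theta$.
   Context: Read type $s_j$ has sampling rate vector $a_j=(a_{1,j},\ldots,a_{I,j})$, and $\theta\cdot a_j=\sum_{i=1}^I\theta_i a_{i,j}$. A collapsing of $s_1,\ldots,s_J$ is a partition $\{C_1,\ldots,C_K\}$ of $\{s_1,\ldots,s_J\}$ into nonempty disjoint categories such that whenever $s_{j_1},s_{j_2}$ lie in the same category, $a_{j_1}=c\,a_{j_2}$ for some real $c>0$. *)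

From HB Require Import structures.
From mathcomp Require Import all_boot all_order all_algebra.
From mathcomp Require Import all_classical all_reals all_analysis.
Set Implicit Arguments. Unset Strict Implicit. Unset Printing Implicit Defensive.
Import Order.TTheory GRing.Theory Num.Theory.
Local Open Scope classical_set_scope.
Local Open Scope ring_scope.

Definition rate_dot (R : realType) (I : nat) (theta a : 'I_I -> R) : R :=
  \sum_(i < I) theta i * a i.

Definition poisson_joint_pmf (R : realType) (I J : nat) (a : 'I_J -> 'I_I -> R)
  (theta : 'I_I -> R) (n : {ffun 'I_J -> nat}) : R :=
  \prod_(j < J) ((rate_dot theta (a j)) ^+ n j * expR (- rate_dot theta (a j))
                  / (n j)`!%:R).

(* A collapsing of s_1..s_J into K categories, given by the labelling map
   c : 'I_J -> 'I_K (category C_k = c^-1(k)); categories nonempty and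
   rate vectors within a category positively proportional. *)
Definition is_collapsing (R : realType) (I J K : nat) (a : 'I_J -> 'I_I -> R)
  (c : 'I_J -> 'I_K) : Prop :=
  (forall k : 'I_K, exists j : 'I_J, c j = k) /\
  (forall j1 j2 : 'I_J, c j1 = c j2 ->
     exists cc : R, 0 < cc /\ forall i, a j1 i = cc * a j2 i).

Definition collapsed_counts (J K : nat) (c : 'I_J -> 'I_K)
  (n : {ffun 'I_J -> nat}) : {ffun 'I_K -> nat} :=
  [ffun k => (\sum_(j < J | c j == k) n j)%N].

(* Sufficiency for a discrete model on a countable sample space:
   P_theta(T = t) = sum_{x : T x = t} f_theta(x), and the conditional pmf
   P_theta(X = x | T = t) does not depend on theta (for all t of positive
   probability). *)
Definition prob_stat_eq (R : realType) (X Y : choiceType) (f : X -> R)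
  (T : X -> Y) (t : Y) : \bar R :=
  (\esum_(x in [set x | T x = t]) (f x)%:E)%E.

Definition cond_pmf_given (R : realType) (X Y : choiceType) (f : X -> R)
  (T : X -> Y) (x : X) (t : Y) : R :=
  if T x == t then f x / fine (prob_stat_eq f T t) else 0.

Definition sufficient_stat (R : realType) (Theta : Type) (inTheta : Theta -> Prop)
  (X Y : choiceType) (f : Theta -> X -> R) (T : X -> Y) : Prop :=
  forall th1 th2 : Theta, inTheta th1 -> inTheta th2 ->
  forall t : Y, (0 < prob_stat_eq (f th1) T t)%E -> (0 < prob_stat_eq (f th2) T t)%E ->
  forall x : X, cond_pmf_given (f th1) T x t = cond_pmf_given (f th2) T x t.

From HB Require Import structures.
From mathcomp Require Import all_boot all_order all_algebra.
From mathcomp Require Import all_classical all_reals all_analysis.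
From mathcomp Require Import ring.
Set Implicit Arguments. Unset Strict Implicit. Unset Printing Implicit Defensive.
Import Order.TTheory GRing.Theory Num.Theory.
Local Open Scope ring_scope.

(* Within a category every rate vector is a positive multiple of the rate
   vector of a fixed representative, so theta . a_j = s_j (theta . a_{r(c j)})
   and the joint pmf factors as G_theta(n_C) * h(n) with h free of theta.
   Conditioning on n_C = t cancels G_theta(t) and leaves
   h(n) / sum_{m : m_C = t} h(m), which does not depend on theta. *)

Lemma ge0_esumZl (R : realType) (T : choiceType) (S : set T) (r : R)
    (a : T -> \bar R) :
  0 < r -> (forall x, (0 <= a x)%E) ->
  (\esum_(x in S) (r%:E * a x) = r%:E * \esum_(x in S) a x)%E.
Proof.
move=> r_gt0 a_ge0; rewrite /esum -ereal_sup_pZl // image_comp.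
by congr ereal_sup; apply: eq_imagel => A _ /=; rewrite ge0_mule_fsumr.
Qed.

Section factorization.
Variables (R : realType) (X Y : choiceType) (T : X -> Y).

Lemma cond_pmf_given_factor (f h : X -> R) (g : R) (t : Y) :
  0 <= g -> (forall x, 0 <= h x) -> (forall x, T x = t -> f x = g * h x) ->
  (0 < prob_stat_eq f T t)%E ->
  forall x, cond_pmf_given f T x t = cond_pmf_given h T x t.
Proof.
move=> g_ge0 h_ge0 f_fact f_pos x.
have prob_f : prob_stat_eq f T t =
    (\esum_(y in [set y | T y = t]) (g%:E * (h y)%:E))%E.
  by apply: eq_esum => y /= Ty; rewrite f_fact.
have g_gt0 : 0 < g.
  rewrite lt_neqAle g_ge0 andbT; apply/eqP => g0; move: f_pos.
  by rewrite prob_f -g0 esum1 ?ltxx // => y _; rewrite mul0e.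
rewrite /cond_pmf_given; case: eqP => // Tx.
rewrite prob_f ge0_esumZl //.
rewrite -/(prob_stat_eq h T t) f_fact //.
(* a divergent sum gives [fine (+oo) = 0], and both quotients vanish *)
case: (prob_stat_eq h T t) => [e| |] /=.
- by rewrite invfM mulrACA mulfV ?mul1r // gt_eqF.
- by rewrite gt0_muley ?lte_fin //= !invr0 !mulr0.
- by rewrite gt0_muleNy ?lte_fin //= !invr0 !mulr0.
Qed.

Lemma factorization_sufficient (Theta : Type) (inTheta : Theta -> Prop)
    (f : Theta -> X -> R) (G : Theta -> Y -> R) (h : X -> R) :
  (forall th t, inTheta th -> 0 <= G th t) -> (forall x, 0 <= h x) ->
  (forall th x, inTheta th -> f th x = G th (T x) * h x) ->
  sufficient_stat inTheta f T.
Proof.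
move=> G_ge0 h_ge0 f_fact th1 th2 th1_in th2_in t pos1 pos2 x.
rewrite (cond_pmf_given_factor (G_ge0 th1 t th1_in) h_ge0) //;
  last by move=> y <-; apply: f_fact.
rewrite (cond_pmf_given_factor (G_ge0 th2 t th2_in) h_ge0) //.
by move=> y <-; apply: f_fact.
Qed.

End factorization.

Lemma rate_dot_ge0 (R : realType) (I : nat) (theta b : 'I_I -> R) :
  (forall i, 0 <= theta i) -> (forall i, 0 <= b i) -> 0 <= rate_dot theta b.
Proof.
by move=> theta_ge0 b_ge0; apply: sumr_ge0 => i _; apply: mulr_ge0.
Qed.

Lemma rate_dotZr (R : realType) (I : nat) (theta b b' : 'I_I -> R) (s : R) :
  (forall i, b i = s * b' i) -> rate_dot theta b = s * rate_dot theta b'.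
Proof.
move=> b_scale; rewrite /rate_dot mulr_sumr; apply: eq_bigr => i _.
by rewrite b_scale mulrCA.
Qed.

Lemma prodr_collapsed_counts (R : comPzSemiRingType) (J K : nat)
    (c : 'I_J -> 'I_K) (n : {ffun 'I_J -> nat}) (x : 'I_K -> R) :
  \prod_(k < K) x k ^+ collapsed_counts c n k = \prod_(j < J) x (c j) ^+ n j.
Proof.
rewrite (partition_big c xpredT) //=; apply: eq_bigr => k _.
by rewrite ffunE -prodrXr; apply: eq_bigr => j /eqP ->.
Qed.

Lemma is_collapsing_representatives (R : realType) (I J K : nat)
    (a : 'I_J -> 'I_I -> R) (c : 'I_J -> 'I_K) :
  is_collapsing a c ->
  exists (r : 'I_K -> 'I_J) (s : 'I_J -> R),
    (forall j, 0 < s j) /\ (forall j i, a j i = s j * a (r (c j)) i).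
Proof.
move=> [c_surj c_prop]; have [r c_r] := boolp.choice c_surj.
have /boolp.choice[s s_prop] : forall j, exists s : R,
    0 < s /\ forall i, a j i = s * a (r (c j)) i.
  by move=> j; apply: c_prop; rewrite c_r.
by exists r, s; split=> j; case: (s_prop j).
Qed.

Section poisson_factorization.
Variables (R : realType) (I J K : nat) (a : 'I_J -> 'I_I -> R).
Variables (c : 'I_J -> 'I_K) (r : 'I_K -> 'I_J) (s : 'I_J -> R).

Definition collapsed_weight (theta : 'I_I -> R) (t : {ffun 'I_K -> nat}) : R :=
  expR (- \sum_(j < J) rate_dot theta (a j)) *
  \prod_(k < K) rate_dot theta (a (r k)) ^+ t k.

Definition count_weight (n : {ffun 'I_J -> nat}) : R :=
  \prod_(j < J) (s j ^+ n j / (n j)`!%:R).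

Lemma collapsed_weight_ge0 theta t :
  (forall j i, 0 <= a j i) -> (forall i, 0 <= theta i) ->
  0 <= collapsed_weight theta t.
Proof.
move=> a_ge0 theta_ge0; rewrite mulr_ge0 ?expR_ge0 //.
by apply: prodr_ge0 => k _; apply/exprn_ge0/rate_dot_ge0.
Qed.

Lemma count_weight_ge0 n : (forall j, 0 <= s j) -> 0 <= count_weight n.
Proof.
by move=> s_ge0; apply: prodr_ge0 => j _; rewrite divr_ge0 ?exprn_ge0.
Qed.

Lemma poisson_joint_pmf_factor theta n :
  (forall j i, a j i = s j * a (r (c j)) i) ->
  poisson_joint_pmf a theta n =
  collapsed_weight theta (collapsed_counts c n) * count_weight n.
Proof.
move=> a_scale; rewrite /collapsed_weight /count_weight prodr_collapsed_counts.
rewrite -sumrN expR_sum -!big_split /=; apply: eq_bigr => j _.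
by rewrite (rate_dotZr theta (a_scale j)) exprMn; ring.
Qed.

End poisson_factorization.

Theorem proposition2 (R : realType) (I J K : nat) (a : 'I_J -> 'I_I -> R)
  (c : 'I_J -> 'I_K) :
  (0 < I)%N -> (0 < J)%N ->
  (forall j i, 0 <= a j i) ->
  (forall j, exists i, a j i != 0) ->
  is_collapsing a c ->
  sufficient_stat (fun theta : 'I_I -> R => forall i, 0 < theta i)
    (poisson_joint_pmf a) (collapsed_counts c).
Proof.
move=> _ _ a_ge0 _ /is_collapsing_representatives[r [s [s_gt0 a_scale]]].
apply: (factorization_sufficient (G := collapsed_weight a r) (h := count_weight s)).
- move=> theta t theta_gt0; apply: collapsed_weight_ge0 => // i.
  exact/ltW/theta_gt0.
- by move=> n; apply: count_weight_ge0 => j; apply/ltW/s_gt0.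
- by move=> theta n _; apply: poisson_joint_pmf_factor.
Qed.
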